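(* Let $H$ be a real symmetric positive definite $d\times d$ matrix and $L$ a real $d\times d$ matrix with $L^TH+HL=0$. Let $s>1$ be odd and consider the $s$-stage explicit Runge–Kutta method applied to $\frac{d}{dt}u=Lu$, $u_{n+1}=G_s u_n$ with $G_s=\sum_{k=0}^s a_k(hL)^k$, $a_0=1$, where $a_k=\frac{1}{k!}$ for $k=1,\dots,s-1$ and $a_s=\frac{1}{s!}-\frac{1}{(s+1)!}$. Then the method has order $p=s-1$ and order of energy accuracy $r=s+2$.
   Context: The order $p$ of the method is the largest integer such that $a_k=1/k!$ for all $1\le k\le p$. For $0\le k\le s$, $b_k=\sum_{i=\max(0,2k-s)}^{\min(2k,s)}(-1)^{k+i}a_i a_{2k-i}$, so that the energy $\mathcal{E}=\tfrac12\langle u,Hu\rangle$ satisfies $\mathcal{E}_{n+1}=\mathcal{E}_n+\tfrac12\sum_{k=1}^s b_k h^{2k}\|L^k u_n\|_H^2$. The leading index $m$ is the smallest $k\ge1$ with $b_k\ne0$ and the order of energy accuracy is $r=2m-1$. *)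

From HB Require Import structures.
From mathcomp Require Import all_boot all_order all_algebra.
Set Implicit Arguments. Unset Strict Implicit. Unset Printing Implicit Defensive.
Import Order.TTheory GRing.Theory Num.Theory.
Local Open Scope ring_scope.

Definition rk_coef (R : fieldType) (s k : nat) : R :=
  if k == 0%N then 1
  else if (k < s)%N then (k`!%:R)^-1
  else if k == s then (s`!%:R)^-1 - (s.+1`!%:R)^-1
  else 0.

Definition order_cond (R : fieldType) (a : nat -> R) (p : nat) : Prop :=
  forall k : nat, (1 <= k <= p)%N -> a k = (k`!%:R)^-1.

Definition is_order (R : fieldType) (a : nat -> R) (p : nat) : Prop :=
  order_cond a p /\ forall q : nat, order_cond a q -> (q <= p)%N.

(* b_k = sum_{i = max(0,2k-s)}^{min(2k,s)} (-1)^(k+i) a_i a_{2k-i}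
   (nat subtraction 2k - s is truncated, i.e. equals max(0, 2k-s)). *)
Definition energy_coef (R : fieldType) (s : nat) (a : nat -> R) (k : nat) : R :=
  \sum_((k.*2 - s)%N <= i < (minn k.*2 s).+1)
     (-1) ^+ (k + i) * a i * a (k.*2 - i)%N.

Definition is_leading_index (R : fieldType) (s : nat) (a : nat -> R) (m : nat)
  : Prop :=
  [/\ (1 <= m <= s)%N, energy_coef s a m != 0 &
      forall k : nat, (1 <= k < m)%N -> energy_coef s a k = 0].

Definition is_energy_order (R : fieldType) (s : nat) (a : nat -> R) (r : nat)
  : Prop :=
  exists m : nat, is_leading_index s a m /\ r = (m.*2 - 1)%N.

From HB Require Import structures.
From mathcomp Require Import all_boot all_order all_algebra.
From mathcomp Require Import zify ring lra.
Set Implicit Arguments. Unset Strict Implicit. Unset Printing Implicit Defensive.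
Import Order.TTheory GRing.Theory Num.Theory.
Local Open Scope ring_scope.

(* Write a_k = 1/k! - e_k, where the tail e vanishes below s, e_s = 1/(s+1)!
   and e_k = 1/k! for k > s.  With the alternating convolution
   (x * y)_n = sum_i (-1)^i x_i y_(n-i) one has b_k = (-1)^k (a * a)_(2k), and
   for even n, (a * a)_n = (c * c)_n - 2 (e * c)_n + (e * e)_n with c_k = 1/k!.
   By the binomial theorem (c * c)_n = (1 - 1)^n / n! = 0 for n > 0.  Since e
   vanishes below s, (e * c)_n = 0 for n < s and (e * e)_n = 0 for n < 2s;
   moreover (e * c)_(s+1) = -(e_s - e_(s+1)) = 0, so b_k = 0 whenever
   2k <= s + 1 (2k = s is excluded by parity).  At 2k = s + 3 the sign of
   b_k is decided by (e * c)_(s+3) = 1/(3 (s+1)!) - 1/(s+2)! + 1/(s+3)! > 0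
   and (e * e)_(s+3) = -e_s e_3 <= 0, so m = (s+3)/2 and r = s + 2.  The
   order p = s - 1 is immediate from a_s <> 1/s!. *)

Section AlternatingConvolution.
Variable R : comPzRingType.
Implicit Types (x y z : nat -> R) (n : nat).

Definition altconv x y n : R := \sum_(0 <= i < n.+1) (-1) ^+ i * x i * y (n - i)%N.

Lemma altconvC x y n : ~~ odd n -> altconv y x n = altconv x y n.
Proof.
move=> n_even; rewrite /altconv big_nat_rev add0n.
apply: eq_big_nat => i /andP[_ lt_i_n1].
have le_i_n : (i <= n)%N by rewrite -ltnS.
rewrite subSS subKn // -signr_odd oddB // (negbTE n_even) /= signr_odd.
by rewrite mulrAC mulrC mulrA.
Qed.

Lemma altconvBl x y z n : altconv (x \- y) z n = altconv x z n - altconv y z n.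
Proof. by rewrite /altconv -sumrB; apply: eq_bigr => i _; rewrite mulrBr mulrBl. Qed.

Lemma altconvBr x y z n : altconv x (y \- z) n = altconv x y n - altconv x z n.
Proof. by rewrite /altconv -sumrB; apply: eq_bigr => i _; rewrite mulrBr. Qed.

Lemma altconv_sqrB x y n : ~~ odd n ->
  altconv (x \- y) (x \- y) n = altconv x x n - altconv y x n *+ 2 + altconv y y n.
Proof.
move=> n_even; rewrite altconvBl !altconvBr (altconvC x y n_even).
by rewrite opprB; ring.
Qed.

Lemma eq_altconv x x' y y' n : x =1 x' -> y =1 y' ->
  altconv x y n = altconv x' y' n.
Proof. by move=> ex ey; apply: eq_bigr => i _; rewrite ex ey. Qed.

Lemma altconv_eq0 x y s t n :
  (forall i, (i < s)%N -> x i = 0) -> (forall i, (i < t)%N -> y i = 0) ->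
  (n < s + t)%N -> altconv x y n = 0.
Proof.
move=> x0 y0 lt_n_st; apply: big1_seq => i /[!mem_index_iota] /andP[_ lt_i_n1].
have [lt_i_s|le_s_i] := ltnP i s; first by rewrite x0 ?mulr0 ?mul0r.
by rewrite y0 ?mulr0 //; lia.
Qed.

Lemma altconv_shift x y s j : (forall i, (i < s)%N -> x i = 0) ->
  altconv x y (s + j)%N =
  (-1) ^+ s * \sum_(0 <= m < j.+1) (-1) ^+ m * x (s + m)%N * y (j - m)%N.
Proof.
move=> x0; rewrite /altconv (big_cat_nat (n := s)) //=; last by lia.
rewrite big1_seq ?add0r; last first.
  by move=> i /[!mem_index_iota] /andP[_ lt_i_s]; rewrite x0 ?mulr0 ?mul0r.
rewrite -{1}[s]add0n big_addn big_distrr (_ : ((s + j).+1 - s = j.+1)%N); last by lia.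
by apply: eq_bigr => m _; rewrite (addnC m) subnDl exprD /= !mulrA.
Qed.

End AlternatingConvolution.

Lemma energy_coefE (R : fieldType) (s : nat) (a : nat -> R) (k : nat) :
  (forall i, (s < i)%N -> a i = 0) -> (k <= s)%N ->
  energy_coef s a k = (-1) ^+ k * altconv a a k.*2.
Proof.
move=> a0 le_k_s; rewrite /altconv /energy_coef.
rewrite [in RHS](big_cat_nat (n := (k.*2 - s)%N)); [|lia|lia]; rewrite /=.
rewrite [in RHS](big_cat_nat (n := (minn k.*2 s).+1) (p := k.*2.+1)); [|lia|lia]; rewrite /=.
rewrite [in RHS]big1_seq ?add0r; last first.
  move=> i /[!mem_index_iota] /andP[_ lt_i].
  by rewrite (a0 (k.*2 - i)%N) ?mulr0 //; lia.
rewrite [X in _ * (_ + X)]big1_seq ?addr0; last first.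
  move=> i /[!mem_index_iota] /andP[lt_i lt_i'].
  by rewrite (a0 i) ?mulr0 ?mul0r //; lia.
by rewrite big_distrr; apply: eq_bigr => i _; rewrite exprD /= !mulrA.
Qed.

Section InverseFactorial.
Variable R : numFieldType.

Definition inv_fact (n : nat) : R := (n`!%:R)^-1.

Lemma inv_fact_gt0 n : 0 < inv_fact n.
Proof. by rewrite invr_gt0 ltr0n fact_gt0. Qed.

Lemma inv_fact0 : inv_fact 0 = 1.
Proof. by rewrite /inv_fact fact0 invr1. Qed.

Lemma inv_fact1 : inv_fact 1 = 1.
Proof. by rewrite /inv_fact factS fact0 invr1. Qed.

Lemma inv_factS n : inv_fact n.+1 * n.+1%:R = inv_fact n.
Proof.
by rewrite /inv_fact factS natrM invfM mulrAC mulVf ?mul1r // pnatr_eq0.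
Qed.

Lemma altconv_inv_fact n : (0 < n)%N -> altconv inv_fact inv_fact n = 0.
Proof.
move=> n_gt0; have fact_neq0 m : m`!%:R != 0 :> R by rewrite pnatr_eq0 -lt0n fact_gt0.
have binomial : n`!%:R * altconv inv_fact inv_fact n = (1 - 1) ^+ n.
  rewrite exprBn /altconv big_mkord mulr_sumr; apply: eq_bigr => -[i /=].
  rewrite ltnS => le_i_n _; rewrite !expr1n !mulr1 -mulr_natr.
  by rewrite -(bin_fact le_i_n) !natrM /inv_fact; field; rewrite !fact_neq0.
apply: (mulfI (fact_neq0 n)).
by rewrite binomial mulr0 subrr expr0n eqn0Ngt n_gt0.
Qed.

End InverseFactorial.

Section RungeKutta.
Variables (R : realFieldType) (s : nat).
Hypothesis s_gt0 : (0 < s)%N.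

Local Notation a := (rk_coef R s).
Local Notation c := (@inv_fact R).

Definition rk_tail (i : nat) : R :=
  if (i < s)%N then 0 else if i == s then c s.+1 else c i.

Lemma rk_coefE i : a i = c i - rk_tail i.
Proof.
rewrite /rk_coef /rk_tail.
have [->|i_neq0] := eqVneq i 0%N; first by rewrite s_gt0 subr0 inv_fact0.
case: ltnP => [_|le_s_i]; first by rewrite subr0.
by case: eqVneq => [->|_]; rewrite ?subrr.
Qed.

Lemma rk_tail_lt i : (i < s)%N -> rk_tail i = 0.
Proof. by rewrite /rk_tail => ->. Qed.

Lemma rk_tail_s : rk_tail s = c s.+1.
Proof. by rewrite /rk_tail ltnn eqxx. Qed.

Lemma rk_tail_gt i : (s < i)%N -> rk_tail i = c i.
Proof. by move=> lt_s_i; rewrite /rk_tail ltnNge ltnW //= gtn_eqF. Qed.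

Lemma rk_tail_ge0 i : 0 <= rk_tail i.
Proof.
by rewrite /rk_tail; case: ifP => // _; case: ifP => _; apply/ltW/inv_fact_gt0.
Qed.

Lemma rk_coef_gt i : (s < i)%N -> a i = 0.
Proof. by move=> lt_s_i; rewrite rk_coefE rk_tail_gt ?subrr. Qed.

Lemma rk_coef_order : is_order a (s - 1).
Proof.
split=> [k /andP[k_gt0 le_k_s1] | q order_q].
  by rewrite rk_coefE rk_tail_lt ?subr0 //; lia.
rewrite leqNgt; apply/negP => lt_s1_q.
have : a s = c s by apply: order_q; lia.
rewrite rk_coefE /rk_tail ltnn eqxx.
by have := inv_fact_gt0 R s.+1; lra.
Qed.

Lemma energy_coef_rk k : (k <= s)%N ->
  energy_coef s a k = (-1) ^+ k *
    (altconv c c k.*2 - altconv rk_tail c k.*2 *+ 2 + altconv rk_tail rk_tail k.*2).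
Proof.
move=> le_k_s; rewrite energy_coefE //; last exact: rk_coef_gt.
have a_split : a =1 c \- rk_tail by move=> i; rewrite rk_coefE.
by rewrite (eq_altconv _ a_split a_split) altconv_sqrB ?odd_double.
Qed.

Hypotheses (s_gt1 : (1 < s)%N) (s_odd : odd s).

Let s_halfK : (s./2.*2).+1 = s.
Proof. by have := odd_double_half s; rewrite s_odd. Qed.

Let s_ge3 : (3 <= s)%N.
Proof. by move: s_halfK s_gt1; lia. Qed.

Lemma altconv_tail_lt y n : (n < s)%N -> altconv rk_tail y n = 0.
Proof.
move=> lt_n_s; apply: (altconv_eq0 (s := s) (t := 0)); rewrite ?addn0 //.
exact: rk_tail_lt.
Qed.

Lemma altconv_tail_tail_lt n : (n < s + s)%N -> altconv rk_tail rk_tail n = 0.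
Proof. by apply: altconv_eq0; apply: rk_tail_lt. Qed.

Lemma altconv_tail_inv_fact_s1 : altconv rk_tail c s.+1 = 0.
Proof.
rewrite -addn1 altconv_shift; last exact: rk_tail_lt.
rewrite !big_nat_recl // big_geq // addn0 rk_tail_s rk_tail_gt ?addn1 //.
by rewrite inv_fact0 inv_fact1 !mulr1 mul1r expr1 mulN1r addr0 subrr mulr0.
Qed.

Lemma altconv_tail_inv_fact_s3 : altconv rk_tail c s.+3 = c s.+1 / 3 - c s.+2 + c s.+3.
Proof.
rewrite -addn3 altconv_shift; last exact: rk_tail_lt.
rewrite !big_nat_recl // big_geq // addn0 rk_tail_s !rk_tail_gt; [|lia..].
have inv_fact2 : c 2 = 2^-1 by [].
have inv_fact3 : c 3 = 6^-1 by [].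
rewrite -signr_odd s_odd /= !addn1 !addn2 !addn3 inv_fact0 inv_fact1 inv_fact2 inv_fact3.
by field.
Qed.

Lemma altconv_tail_inv_fact_s3_gt0 : 0 < altconv rk_tail c s.+3.
Proof.
rewrite altconv_tail_inv_fact_s3 -(inv_factS R s.+1).
have : 4 <= s.+2%:R :> R by rewrite ler_nat.
have := inv_fact_gt0 R s.+2; have := inv_fact_gt0 R s.+3.
nra.
Qed.

Lemma altconv_tail_tail_s3_le0 : altconv rk_tail rk_tail s.+3 <= 0.
Proof.
rewrite -addn3 altconv_shift; last exact: rk_tail_lt.
rewrite !big_nat_recl // big_geq // addn0 subn0 subnn (rk_tail_lt s_gt0).
rewrite !(@rk_tail_lt (3 - _)); [|lia..].
rewrite -signr_odd s_odd.
by rewrite !mulr0 !addr0 expr0 mul1r mulN1r oppr_le0 mulr_ge0 ?rk_tail_ge0.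
Qed.

Lemma energy_coef_rk_below k : (0 < k)%N -> (k.*2 <= s.+1)%N -> energy_coef s a k = 0.
Proof.
move=> k_gt0 le_2k_s1; rewrite energy_coef_rk; last by lia.
rewrite altconv_inv_fact ?double_gt0 // sub0r.
have [lt_2k_s|le_s_2k] := ltnP k.*2 s.
  by rewrite !altconv_tail_lt // mul0rn oppr0 add0r mulr0.
have -> : k.*2 = s.+1 by move: s_halfK; lia.
by rewrite altconv_tail_inv_fact_s1 altconv_tail_tail_lt ?mul0rn ?oppr0 ?add0r ?mulr0 //; lia.
Qed.

Lemma energy_coef_rk_lead k : k.*2 = s.+3 -> energy_coef s a k != 0.
Proof.
move=> k2; rewrite energy_coef_rk; last by lia.
rewrite k2 altconv_inv_fact // mulf_neq0 ?signr_eq0 // ltr0_neq0 //.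
have := altconv_tail_inv_fact_s3_gt0; have := altconv_tail_tail_s3_le0.
rewrite mulr2n; lra.
Qed.

Lemma rk_energy_order : is_energy_order s a (s + 2).
Proof.
exists (s./2).+2; split; last by move: s_halfK; lia.
split.
- by move: s_halfK s_gt1; lia.
- by apply: energy_coef_rk_lead; move: s_halfK; lia.
- by move=> k /andP[k_gt0 lt_k_m]; apply: energy_coef_rk_below => //; move: s_halfK; lia.
Qed.

End RungeKutta.

Theorem proposition3 (R : realFieldType) (d s : nat) (H L : 'M[R]_d) :
  (1 < s)%N -> odd s ->
  H^T = H ->
  (forall v : 'cV[R]_d, v != 0 -> 0 < (v^T *m H *m v) 0 0) ->
  L^T *m H + H *m L = 0 ->
  is_order (rk_coef R s) (s - 1) /\ is_energy_order s (rk_coef R s) (s + 2).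
Proof.
(* The hypotheses on H and L only explain why b_k measures the energy
   defect; the claim is about the coefficients alone. *)
move=> s_gt1 s_odd _ _ _.
split; first exact: rk_coef_order (ltnW s_gt1).
exact: rk_energy_order (ltnW s_gt1) s_gt1 s_odd.
Qed.
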